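(* Let $q$ be a prime power with $q\equiv1\pmod4$, let $n=q+1$, $n'=n/2$, $\ell=(n-2)/4$, and $P=\{-\ell,\dots,-1,0,1,\dots,\ell\}\subseteq\mathbb{Z}_n$. Let $\theta\in\mathbb{F}_{q^2}$ be a primitive $n$-th root of unity (used to define $f_P$ and $C_P$). Then $P$ is $\mu_q$-invariant, and (i) $C_P\subseteq R_n$ is an iso-self-dual cyclic code, with $\varphi_{-1,n'}(C_P)=C_P^\perp$; (ii) $C_P$ is the alternant code obtained by restricting to $\mathbb{F}_q$ the generalized Reed–Solomon code $\{(a(1),\theta^{\ell}a(\theta^{-1}),\dots,\theta^{(n-1)\ell}a(\theta^{-(n-1)})) : a(X)\in\mathbb{F}_{q^2}[X],\ \deg a(X)<n'\}$ over $\mathbb{F}_{q^2}$, i.e. $C_P$ is the set of codewords of that code with all coordinates in $\mathbb{F}_q$; in particular $C_P$ is a $[q+1,\frac{q+1}{2},\frac{q+3}{2}]$ MDS code over $\mathbb{F}_q$.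
   Context: $\mathbb{Z}_n=\mathbb{Z}/n\mathbb{Z}$. $R_n=\mathbb{F}_q[X]/\langle X^n-1\rangle$, elements identified with representatives $a_0+\dots+a_{n-1}X^{n-1}$ and words $(a_0,\dots,a_{n-1})\in\mathbb{F}_q^n$; cyclic codes are ideals of $R_n$; $C^\perp$ is the Euclidean dual. $\mu_q:\mathbb{Z}_n\to\mathbb{Z}_n$, $i\mapsto qi\bmod n$; $P$ is $\mu_q$-invariant if $\mu_q(P)=P$. For $\mu_q$-invariant $P$, $f_P(X)=\prod_{i\in P}(X-\theta^i)\in\mathbb{F}_q[X]$ and $C_P$ is the ideal of $R_n$ generated by $(X^n-1)/f_P(X)$ (the cyclic code with check polynomial $f_P$). For $s\in\mathbb{Z}_n^*$, $t\in\mathbb{Z}_n$ with $qt\equiv t\pmod n$, $\varphi_{s,t}:R_n\to R_n$, $a(X)\mapsto a(\theta^{-t}X^{s^{-1}})\bmod(X^n-1)$ with $s^{-1}$ a positive integer, $ss^{-1}\equiv1\pmod n$. A cyclic code $C$ is iso-self-dual if $\varphi_{s,t}(C)=C^\perp$ for some such $s,t$. *)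

From HB Require Import structures.
From mathcomp Require Import all_boot all_order all_algebra all_field.
Set Implicit Arguments. Unset Strict Implicit. Unset Printing Implicit Defensive.
Import GRing.Theory.
Local Open Scope ring_scope.

(* Words of length n over R are row vectors 'rV[R]_n; the word (a_0,...,a_{n-1})
   is identified with the representative a_0 + ... + a_{n-1} X^{n-1} of R_n. *)
Definition wpoly (R : nzRingType) (n : nat) (c : 'rV[R]_n) : {poly R} :=
  \sum_(i < n) (c ord0 i)%:P * 'X^i.

Definition pword (R : nzRingType) (n : nat) (p : {poly R}) : 'rV[R]_n :=
  \row_(i < n) p`_i.

Definition muq_invariant (m q : nat) (P : {set 'I_m.+1}) : bool :=
  [set (inord ((q * i) %% m.+1)%N : 'I_m.+1) | i : 'I_m.+1 in P] == P.

Definition fP (L : fieldType) (m : nat) (theta : L) (P : {set 'I_m.+1}) : {poly L} :=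
  \prod_(i in P) ('X - (theta ^+ i)%:P).

(* C_P : the ideal of R_n = F[X]/<X^n-1> generated by (X^n-1)/f_P(X);
   F is embedded in L via iota, and computations are done in L[X]. *)
Definition CP (F : finFieldType) (L : fieldType) (iota : {rmorphism F -> L}) (m : nat) (theta : L)
    (P : {set 'I_m.+1}) : {set 'rV[F]_m.+1} :=
  let g := ('X^(m.+1) - 1) %/ fP theta P in
  [set c : 'rV[F]_m.+1 | [exists a : 'rV[F]_m.+1,
      wpoly (map_mx iota c) == (wpoly (map_mx iota a) * g) %% ('X^(m.+1) - 1)]].

Definition dual_code (F : finFieldType) (n : nat) (C : {set 'rV[F]_n}) : {set 'rV[F]_n} :=
  [set x : 'rV[F]_n | [forall c in C, \sum_(i < n) x ord0 i * c ord0 i == 0]].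

(* phi_{s,t} : a(X) |-> a(theta^{-t} X^{s^{-1}}) mod (X^n - 1), given s^{-1} = sinv *)
Definition phi_poly (L : fieldType) (n : nat) (theta : L) (sinv t : nat)
    (a : {poly L}) : {poly L} :=
  (a \Po ((theta ^- t)%:P * 'X^sinv)) %% ('X^n - 1).

Definition phi_image (F : finFieldType) (L : fieldType) (iota : {rmorphism F -> L}) (n : nat)
    (theta : L) (sinv t : nat) (C : {set 'rV[F]_n}) : {set 'rV[F]_n} :=
  [set y : 'rV[F]_n | [exists c in C,
      map_mx iota y == pword n (phi_poly n theta sinv t (wpoly (map_mx iota c)))]].

Definition iso_self_dual (F : finFieldType) (L : fieldType) (iota : {rmorphism F -> L}) (q n : nat)
    (theta : L) (C : {set 'rV[F]_n}) : Prop :=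
  exists s sinv t : nat,
    [/\ (s < n)%N, coprime s n, (s * sinv == 1 %[mod n])%N & (0 < sinv)%N] /\
    [/\ (t < n)%N, (q * t == t %[mod n])%N &
        phi_image iota theta sinv t C = dual_code C].

Definition wt (F : fieldType) (n : nat) (c : 'rV[F]_n) : nat :=
  #|[set i : 'I_n | c ord0 i != 0]|.

(* Over L = F_{q^2}, evaluating a word at the powers of theta is a discrete
   Fourier transform.  C_P consists of the F-words whose transform vanishes off
   P, and C_P^perp of the F-words x with x(theta^-i) = 0 for i in P, the hard
   inclusion coming from orthogonality to the F-rational trace words
   b w^j + (b w^j)^q.  Since q = -1 in Z_n, P = -P, and phi_{-1,n'} acts on
   transforms by k |-> n' - k, which swaps P = [-l, l] with its complement;
   hence phi(C_P) = C_P^perp.  The transform of the GRS word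
   (theta^(j l) a(theta^-j))_j is the coefficient sequence of a shifted by l,
   which gives the alternant description; a nonzero a of degree < n' has
   fewer than n' roots, bounding the weight from below, and the generator
   polynomial, of degree n - n', attains the bound. *)

From HB Require Import structures.
From mathcomp Require Import all_boot all_order all_algebra all_field zify.
Set Implicit Arguments. Unset Strict Implicit. Unset Printing Implicit Defensive.
Import GRing.Theory.
Local Open Scope ring_scope.

Section WordPolynomial.
Variables (R : nzRingType) (k : nat).
Implicit Types (v : 'rV[R]_k) (p : {poly R}).

Lemma coef_wpoly v (i : 'I_k) : (wpoly v)`_i = v ord0 i.
Proof.
rewrite /wpoly coef_sum (bigD1 i) //= coefCM coefXn eqxx mulr1 big1 ?addr0 //.
by move=> j /negbTE ji; rewrite coefCM coefXn val_eqE eq_sym ji mulr0.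
Qed.

Lemma coef_wpoly_out v i : (k <= i)%N -> (wpoly v)`_i = 0.
Proof.
move=> ki; rewrite /wpoly coef_sum big1 // => j _.
by rewrite coefCM coefXn gtn_eqF ?mulr0 // (leq_trans (ltn_ord j)).
Qed.

Lemma size_wpoly v : (size (wpoly v) <= k)%N.
Proof. exact/leq_sizeP/coef_wpoly_out. Qed.

Lemma wpolyK : cancel (@wpoly R k) (pword k).
Proof. by move=> v; apply/rowP => i; rewrite mxE coef_wpoly. Qed.

Lemma pwordK p : (size p <= k)%N -> wpoly (pword k p) = p.
Proof.
move=> sp; apply/polyP => i; have [ik | ki] := ltnP i k.
  by rewrite (coef_wpoly _ (Ordinal ik)) mxE.
by rewrite coef_wpoly_out // nth_default // (leq_trans sp).
Qed.

Lemma pword_inj p1 p2 : (size p1 <= k)%N -> (size p2 <= k)%N ->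
  pword k p1 = pword k p2 -> p1 = p2.
Proof. by move=> s1 s2 e; rewrite -(pwordK s1) -(pwordK s2) e. Qed.

End WordPolynomial.

Lemma map_wpoly (R S : nzRingType) (f : {rmorphism R -> S}) k (v : 'rV[R]_k) :
  wpoly (map_mx f v) = map_poly f (wpoly v).
Proof.
rewrite /wpoly rmorph_sum; apply: eq_bigr => i _.
by rewrite mxE rmorphM /= map_polyC map_polyXn.
Qed.

Lemma map_pword (R S : nzRingType) (f : {rmorphism R -> S}) k (p : {poly R}) :
  pword k (map_poly f p) = map_mx f (pword k p).
Proof. by apply/rowP => i; rewrite !mxE coef_map. Qed.

Lemma wt_pword (F : fieldType) k (p : {poly F}) : (wt (pword k p) <= size p)%N.
Proof.
rewrite /wt cardE -(size_map val) -[X in (_ <= X)%N](size_iota 0).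
apply: uniq_leq_size; first by rewrite map_inj_uniq ?enum_uniq //; exact: val_inj.
move=> x /mapP[i]; rewrite mem_enum inE mxE => nz ->; rewrite mem_iota add0n.
by rewrite ltnNge; apply: contra nz => /(nth_default 0) ->.
Qed.

Lemma horner_wpoly (R : nzRingType) k (v : 'rV[R]_k) (x : R) :
  (wpoly v).[x] = \sum_(j < k) v ord0 j * x ^+ j.
Proof. by rewrite /wpoly horner_sum; apply: eq_bigr => j _; rewrite hornerCM hornerXn. Qed.

(* The otherwise unused morphism argument certifies that #|F| is a power of
   the characteristic of R, which makes x |-> x ^+ #|F| additive. *)
Definition cardFrobenius (F : finFieldType) (R : comNzRingType) of {rmorphism F -> R} :=
  fun x : R => x ^+ #|F|.

Section CardFrobenius.
Variables (F : finFieldType) (R : comNzRingType) (iota : {rmorphism F -> R}).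

Lemma pchar_card_pnat : [pchar R].-nat #|F|.
Proof.
have [p p_pr pcharFp] := finPcharP F.
by rewrite (card_pprimeChar pcharFp) pnatX pnatE // (rmorph_pchar iota pcharFp).
Qed.

Lemma cardFrobenius_is_nmod_morphism : nmod_morphism (cardFrobenius iota).
Proof.
split=> [|x y]; rewrite /cardFrobenius; last exact: exprDn_pchar pchar_card_pnat.
by rewrite expr0n gtn_eqF // ltnW // finNzRing_gt1.
Qed.

Lemma cardFrobenius_is_monoid_morphism : monoid_morphism (cardFrobenius iota).
Proof. by split=> [|x y]; rewrite /cardFrobenius ?expr1n ?exprMn. Qed.

#[export]
HB.instance Definition _ := GRing.isNmodMorphism.Build R R (cardFrobenius iota)
  cardFrobenius_is_nmod_morphism.
#[export]
HB.instance Definition _ := GRing.isMonoidMorphism.Build R R (cardFrobenius iota)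
  cardFrobenius_is_monoid_morphism.

End CardFrobenius.

Section FiniteSubfield.
Variables (F L : finFieldType) (iota : {rmorphism F -> L}).
Local Notation q := #|F|.

Lemma rmorph_expr_card x : iota x ^+ q = iota x.
Proof. by rewrite -rmorphXn expf_card. Qed.

Lemma natr_card : q%:R = 0 :> L.
Proof.
have [p p_pr pcharFp] := finPcharP F.
have := card_pprimeChar pcharFp; case: (logn _ _) => [|k] cardF.
  by have := finNzRing_gt1 F; rewrite cardF.
by rewrite -(rmorph_nat iota) cardF natrX (pcharf0 pcharFp) expr0n rmorph0.
Qed.

Definition iota_pre (y : L) : F := odflt 0 [pick x | iota x == y].

Lemma iota_preK y : y ^+ q = y -> iota (iota_pre y) = y.
Proof.
move=> yq; have : root (map_poly iota ('X^q - 'X)) y.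
  by rewrite rmorphB /= map_polyXn map_polyX rootE !hornerE yq subrr.
have -> : map_poly iota ('X^q - 'X) = \prod_(z <- [seq iota x | x : F]) ('X - z%:P).
  rewrite finField_genPoly rmorph_prod big_image /=; apply: eq_bigr => x _.
  by rewrite rmorphB /= map_polyX map_polyC.
rewrite root_prod_XsubC => /imageP[x _ ->]; rewrite /iota_pre.
by case: pickP => [z /eqP // | /(_ x)]; rewrite eqxx.
Qed.

Lemma exists_trace_neq0 : (q < #|L|)%N -> exists z : L, z + z ^+ q != 0.
Proof.
move=> qL; apply/existsP; apply: contraLR qL; rewrite negb_exists -leqNgt => /forallP tr0.
have q_gt1 := finNzRing_gt1 F.
have sizeT : size ('X^q + 'X : {poly L}) = q.+1.
  by rewrite size_polyDl ?size_polyXn // size_polyX ltnS.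
rewrite cardE -ltnS -sizeT max_poly_roots ?enum_uniq // -?size_poly_eq0 ?sizeT //.
by apply/allP => z _; rewrite rootE !hornerE addrC; apply/negbNE/tr0.
Qed.

End FiniteSubfield.

Lemma sum_unity_root_expr (R : idomainType) n (z : R) : n.-unity_root z ->
  \sum_(i < n) z ^+ i = if z == 1 then n%:R else 0.
Proof.
rewrite unity_rootE => /eqP zn; have [-> | z1] := eqVneq z 1.
  by rewrite (eq_bigr (fun _ => 1)) => [|i _]; rewrite ?expr1n // sumr_const card_ord.
have z1' : z - 1 != 0 by rewrite subr_eq0.
by apply: (mulfI z1'); rewrite -subrX1 zn subrr mulr0.
Qed.

Lemma prim_root_natr_neq0 (R : fieldType) n (z : R) : n.-primitive_root z -> n%:R != 0 :> R.
Proof.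
move=> zn; have n_gt0 := prim_order_gt0 zn.
have Xsub1_neq0 : 'X - 1 != 0 :> {poly R} by rewrite -polyC1 polyXsubC_eq0.
have := factor_Xn_sub_1 zn; rewrite big_ltn // expr0 polyC1 subrX1.
move=> /(mulfI Xsub1_neq0) /(congr1 (horner^~ 1)); rewrite horner_prod horner_sum.
rewrite [in RHS](eq_bigr (fun _ => 1)) => [|i _]; last by rewrite hornerXn expr1n.
rewrite sumr_const card_ord => <-; rewrite prodf_seq_neq0; apply/allP => i.
rewrite mem_index_iota => /andP[i_gt0 lt_in]; rewrite hornerXsubC subr_eq0 eq_sym.
by rewrite -(prim_order_dvd zn) gtnNdvd.
Qed.

Lemma horner_mod_Xn_sub1 (R : fieldType) n (z : R) (p : {poly R}) :
  n.-unity_root z -> (p %% ('X^n - 1)).[z] = p.[z].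
Proof.
rewrite unity_rootE => /eqP zn.
by rewrite [in RHS](divp_eq p ('X^n - 1)) !hornerE zn subrr mulr0 add0r.
Qed.

Lemma prim_root_half (R : idomainType) k (z : R) : (2 * k).-primitive_root z -> z ^+ k = -1.
Proof.
move=> zp; have k_gt0 : (0 < k)%N by have := prim_order_gt0 zp; rewrite muln_gt0.
have /eqP : (z ^+ k) ^+ 2 = 1 by rewrite -exprM mulnC (prim_expr_order zp).
rewrite sqrf_eq1 => /orP[/eqP zk1 | /eqP //].
by have := prim_order_dvd zp k; rewrite zk1 eqxx gtnNdvd // -{1}[k]mul1n ltn_pmul2r.
Qed.

Section DiscreteFourierTransform.
Variables (L : fieldType) (n : nat) (theta : L).
Hypothesis theta_prim : n.-primitive_root theta.
Implicit Types (v x : 'rV[L]_n) (a : {poly L}).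

Definition dft v k : L := (wpoly v).[theta ^+ k].

Lemma dftE v k : dft v k = \sum_(j < n) v ord0 j * (theta ^+ k) ^+ j.
Proof. exact: horner_wpoly. Qed.

Lemma eq_dft_mod v k1 k2 : k1 = k2 %[mod n] -> dft v k1 = dft v k2.
Proof. by move=> eq_k; rewrite /dft -(prim_expr_mod theta_prim) eq_k prim_expr_mod. Qed.

Lemma dftD v x k : dft (v + x) k = dft v k + dft x k.
Proof. by rewrite !dftE -big_split; apply: eq_bigr => j _; rewrite mxE mulrDl. Qed.

Lemma theta_neq0 : theta != 0.
Proof. by rewrite (prim_root_eq0 theta_prim) -lt0n (prim_order_gt0 theta_prim). Qed.

Lemma expr_theta_order k : (theta ^+ k) ^+ n = 1.
Proof. by rewrite exprAC (prim_expr_order theta_prim) expr1n. Qed.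

Lemma expr_theta_inj : injective (fun i : 'I_n => theta ^+ i).
Proof.
move=> i j /eqP; rewrite (eq_prim_root_expr theta_prim) !modn_small //.
by move=> /eqP /val_inj.
Qed.

Lemma theta_ratio_eq1 (k i : 'I_n) : (theta ^+ k / theta ^+ i == 1) = (k == i).
Proof.
have ti_neq0 : theta ^+ i != 0 by rewrite expf_neq0 // theta_neq0.
by rewrite -(inj_eq (mulIf ti_neq0)) divfK // mul1r (inj_eq expr_theta_inj).
Qed.

Lemma sum_prim_root_ratio k i :
  \sum_(j < n) (theta ^+ k / theta ^+ i) ^+ j = if k == i %[mod n] then n%:R else 0.
Proof.
have ti_neq0 : theta ^+ i != 0 by rewrite expf_neq0 // theta_neq0.
rewrite sum_unity_root_expr; last first.
  by rewrite unity_rootE exprMn exprVn !expr_theta_order invr1 mulr1.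
by rewrite -(inj_eq (mulIf ti_neq0)) divfK // mul1r (eq_prim_root_expr theta_prim).
Qed.

Lemma dft_geom b z k : n.-unity_root z ->
  dft (\row_(j < n) (b * z ^+ j)) k = if theta ^+ k * z == 1 then b *+ n else 0.
Proof.
move=> zn; rewrite dftE (eq_bigr (fun j : 'I_n => b * (theta ^+ k * z) ^+ j)); last first.
  by move=> j _; rewrite mxE exprMn mulrAC mulrA.
rewrite -mulr_sumr sum_unity_root_expr; last first.
  by rewrite unity_rootE exprMn expr_theta_order mul1r -unity_rootE.
by case: ifP; rewrite ?mulr0 // mulr_natr.
Qed.

Lemma dft_inv v (j : 'I_n) : v ord0 j *+ n = \sum_(i < n) dft v i * (theta ^- j) ^+ i.
Proof.
rewrite (eq_bigr (fun i : 'I_n => \sum_(k < n) v ord0 k * (theta ^+ k / theta ^+ j) ^+ i)).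
  rewrite exchange_big /= (bigD1 j) //= -mulr_sumr sum_prim_root_ratio eqxx mulr_natr.
  rewrite big1 ?addr0 // => k kj; rewrite -mulr_sumr sum_prim_root_ratio !modn_small //.
  by rewrite val_eqE (negbTE kj) mulr0.
by move=> i _; rewrite dftE mulr_suml; apply: eq_bigr => k _; rewrite exprMn mulrA exprAC.
Qed.

Lemma dft_inj v x : (forall i : 'I_n, dft v i = dft x i) -> v = x.
Proof.
move=> eq_dft; apply/rowP => j; apply: (mulIf (prim_root_natr_neq0 theta_prim)).
by rewrite !mulr_natr !dft_inv; apply: eq_bigr => i _; rewrite eq_dft.
Qed.

Lemma dot_dft x v :
  (\sum_(j < n) x ord0 j * v ord0 j) *+ n = \sum_(i < n) dft v i * (wpoly x).[theta ^- i].
Proof.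
rewrite -sumrMnl; under eq_bigr do rewrite -mulrnAr dft_inv mulr_sumr.
rewrite exchange_big /=; apply: eq_bigr => i _; rewrite horner_wpoly mulr_sumr.
by apply: eq_bigr => j _; rewrite mulrCA !exprVn exprAC.
Qed.

Definition grs_word s a : 'rV[L]_n := \row_(j < n) (theta ^+ (j * s) * a.[theta ^- j]).

Lemma dft_grs_word s a k : (size a <= n)%N -> dft (grs_word s a) k = a`_((k + s) %% n) *+ n.
Proof.
move=> sa; have n_gt0 := prim_order_gt0 theta_prim.
rewrite dftE.
rewrite (eq_bigr (fun j : 'I_n => \sum_(i < n) a`_i * (theta ^+ (k + s) / theta ^+ i) ^+ j)).
  rewrite exchange_big /= (bigD1 (Ordinal (ltn_pmod (k + s) n_gt0))) //= -mulr_sumr.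
  rewrite sum_prim_root_ratio modn_mod eqxx mulr_natr big1 ?addr0 // => i ik.
  rewrite -mulr_sumr sum_prim_root_ratio (modn_small (ltn_ord i)) eq_sym.
  by rewrite -(inj_eq val_inj) /= in ik; rewrite (negbTE ik) mulr0.
move=> j _; rewrite mxE (horner_coef_wide _ sa) mulr_sumr mulr_suml; apply: eq_bigr => i _.
rewrite mulrCA mulrAC exprMn !exprVn -!exprM -mulrA [theta ^+ (k * j) * _]mulrA -exprD.
by rewrite (mulnC i) mulnDl (mulnC j) addnC.
Qed.

Lemma grs_word_wt s a : a != 0 -> (n < wt (grs_word s a) + size a)%N.
Proof.
move=> a_neq0; pose Z := [set j : 'I_n | grs_word s a ord0 j == 0].
have -> : wt (grs_word s a) = #|~: Z| by apply: eq_card => j; rewrite !inE.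
have : (#|Z| < size a)%N.
  rewrite cardE -(size_map (fun j : 'I_n => theta ^- j)); apply: max_poly_roots => //.
    apply/allP => z /mapP[j]; rewrite mem_enum inE mxE mulf_eq0 expf_eq0 (negbTE theta_neq0).
    by rewrite andbF /= => a0 ->.
  by rewrite map_inj_uniq ?enum_uniq // => i j /invr_inj /expr_theta_inj.
by have := cardsC Z; rewrite card_ord; lia.
Qed.

Lemma size_Xn_sub1 : size ('X^n - 1 : {poly L}) = n.+1.
Proof. by rewrite -polyC1 size_XnsubC // (prim_order_gt0 theta_prim). Qed.

Lemma dft_phi_poly s t a k :
  dft (pword n (phi_poly n theta s t a)) k = a.[theta ^- t * theta ^+ (k * s)].
Proof.
rewrite /dft pwordK; last by rewrite -ltnS -size_Xn_sub1 ltn_modp -size_poly_eq0 size_Xn_sub1.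
rewrite horner_mod_Xn_sub1 ?unity_rootE ?expr_theta_order //.
by rewrite horner_comp !hornerE exprM.
Qed.

End DiscreteFourierTransform.

Lemma wt_map_mx (F K : fieldType) (f : {rmorphism F -> K}) k (c : 'rV[F]_k) :
  wt (map_mx f c) = wt c.
Proof. by apply: eq_card => i; rewrite !inE mxE fmorph_eq0. Qed.

Lemma phi_poly_map (F L : fieldType) (iota : {rmorphism F -> L}) n (theta : L) s t c
    (p : {poly F}) : theta ^- t = iota c ->
  phi_poly n theta s t (map_poly iota p) = map_poly iota ((p \Po (c%:P * 'X^s)) %% ('X^n - 1)).
Proof.
move=> tc; rewrite /phi_poly map_modp map_comp_poly rmorphM rmorphB /=.
by rewrite map_polyC !map_polyXn rmorph1 tc.
Qed.

Section CyclicCode.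
Variables (F L : finFieldType) (iota : {rmorphism F -> L}) (m : nat) (theta : L).
Variable P : {set 'I_m.+1}.
Hypotheses (theta_prim : m.+1.-primitive_root theta) (P_inv : muq_invariant #|F| P).
Local Notation n := m.+1.
Local Notation q := #|F|.
Local Notation C := (CP iota theta P).
Local Notation frob := (cardFrobenius iota).

Let muq (i : 'I_n) : 'I_n := inord (q * i %% n).

Lemma expr_theta_muq i : theta ^+ muq i = (theta ^+ i) ^+ q.
Proof. by rewrite inordK ?ltn_pmod // (prim_expr_mod theta_prim) -exprM mulnC. Qed.

Lemma muq_inj_in : {in P &, injective muq}.
Proof. by apply/imset_injP; rewrite (eqP P_inv). Qed.

Lemma muq_mem i : i \in P -> muq i \in P.
Proof. by move=> iP; rewrite -[in X in _ \in X](eqP P_inv); apply: imset_f. Qed.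

Let g := ('X^n - 1) %/ fP theta P.

Lemma gen_prod : g = \prod_(i in ~: P) ('X - (theta ^+ i)%:P).
Proof.
rewrite /g -(factor_Xn_sub_1 theta_prim) big_mkord (bigID (mem P)) /= mulKp.
  by apply: eq_bigl => i; rewrite in_setC.
exact/monic_neq0/monic_prod_XsubC.
Qed.

Lemma size_gen : size g = (n - #|P|).+1.
Proof. by rewrite gen_prod -big_enum size_prod_XsubC -cardE cardsCs setCK card_ord. Qed.

Lemma root_gen i : i \notin P -> g.[theta ^+ i] = 0.
Proof.
move=> iNP; rewrite gen_prod horner_prod (bigD1 i) ?inE //=.
by rewrite hornerXsubC subrr mul0r.
Qed.

Lemma map_frob_gen : map_poly frob g = g.
Proof.
have frob_fP : map_poly frob (fP theta P) = fP theta P.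
  rewrite /fP rmorph_prod -[in RHS](eqP P_inv) big_imset /=; last exact: muq_inj_in.
  apply: eq_bigr => i _; rewrite rmorphB /= map_polyX map_polyC /=.
  by rewrite /cardFrobenius -expr_theta_muq.
by rewrite /g map_divp frob_fP rmorphB /= map_polyXn rmorph1.
Qed.

Definition genF : {poly F} := \poly_(k < size g) iota_pre iota g`_k.

Lemma map_genF : map_poly iota genF = g.
Proof.
apply/polyP => k; rewrite coef_map coef_poly; case: ltnP => [_ | gk] /=.
  by rewrite iota_preK // -[_ ^+ q]/(frob _) -coef_map map_frob_gen.
by rewrite rmorph0 nth_default.
Qed.

Lemma size_genF : size genF = (n - #|P|).+1.
Proof. by rewrite -size_gen -map_genF size_map_poly. Qed.

Lemma genF_neq0 : genF != 0.
Proof. by rewrite -size_poly_eq0 size_genF. Qed.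

Lemma card_P_le : (#|P| <= n)%N.
Proof. by rewrite -[X in (_ <= X)%N]card_ord max_card. Qed.

Definition encode (b : 'rV[F]_#|P|) : 'rV[F]_n := pword n (wpoly b * genF).

Lemma size_encode_poly (b : 'rV[F]_#|P|) : (size (wpoly b * genF)%R <= n)%N.
Proof.
have := size_wpoly b; have := card_P_le => sb cP.
by apply: leq_trans (size_mul_leq _ _) _; rewrite size_genF; lia.
Qed.

Lemma encode_inj : injective encode.
Proof.
move=> b1 b2 /(pword_inj (size_encode_poly b1) (size_encode_poly b2)).
by move=> /(mulIf genF_neq0) /(congr1 (pword #|P|)); rewrite !wpolyK.
Qed.

Lemma encode_CP b : encode b \in C.
Proof.
have sb : (size (wpoly b) <= n)%N := leq_trans (size_wpoly b) card_P_le.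
rewrite inE -/g; apply/existsP; exists (pword n (wpoly b)); apply/eqP.
rewrite -!map_pword !pwordK ?size_map_poly ?size_encode_poly // rmorphM /= map_genF.
rewrite modp_small // (size_Xn_sub1 theta_prim) ltnS.
by rewrite -map_genF -rmorphM size_map_poly size_encode_poly.
Qed.

Lemma dft_CP c : c \in C -> forall i : 'I_n, i \notin P -> dft theta (map_mx iota c) i = 0.
Proof.
rewrite inE -/g => /existsP[a /eqP eq_c] i iNP.
rewrite /dft eq_c horner_mod_Xn_sub1 ?unity_rootE ?expr_theta_order //.
by rewrite hornerM root_gen ?mulr0.
Qed.

Lemma dft_vanish_encode c :
  (forall i : 'I_n, i \notin P -> dft theta (map_mx iota c) i = 0) -> exists b, c = encode b.
Proof.
move=> dft0; pose h := wpoly c %/ genF.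
have [r eq_r] : exists r, map_poly iota (wpoly c) = r * g.
  pose zs := [seq theta ^+ i | i : 'I_n in ~: P].
  have zs_roots : all (root (map_poly iota (wpoly c))) zs.
    apply/allP => _ /imageP[i iNP ->]; rewrite /root -map_wpoly.
    by apply/eqP/dft0; rewrite -in_setC.
  have zs_uniq : uniq_roots zs.
    by rewrite uniq_rootsE map_inj_in_uniq ?enum_uniq // => i j _ _; apply: expr_theta_inj.
  have [r ->] := uniq_roots_prod_XsubC zs_roots zs_uniq.
  by exists r; rewrite big_image gen_prod.
have eq_h : h * genF = wpoly c.
  apply: (@map_poly_inj _ _ iota); rewrite rmorphM /= map_divp map_genF eq_r mulpK //.
  by rewrite -size_poly_eq0 size_gen.
have size_h : (size h <= #|P|)%N.
  by rewrite size_divp ?genF_neq0 // size_genF leq_subLR subnK ?card_P_le ?size_wpoly.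
by exists (pword #|P| h); rewrite /encode pwordK // eq_h wpolyK.
Qed.

Lemma CP_dftP c :
  reflect (forall i : 'I_n, i \notin P -> dft theta (map_mx iota c) i = 0) (c \in C).
Proof.
apply: (iffP idP); first exact: dft_CP.
by move=> /dft_vanish_encode[b ->]; apply: encode_CP.
Qed.

Lemma card_CP : #|C| = (q ^ #|P|)%N.
Proof.
have -> : C = encode @: setT.
  apply/setP => c; apply/idP/imsetP => [/CP_dftP/dft_vanish_encode[b ->] | [b _ ->]].
    by exists b.
  exact: encode_CP.
by rewrite card_imset ?cardsT ?card_mx ?mul1n //; apply: encode_inj.
Qed.

Lemma gen_word_CP : (0 < #|P|)%N -> pword n genF \in C.
Proof.
move=> P_gt0; apply/CP_dftP => i iNP; rewrite -map_pword map_genF /dft pwordK.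
  exact: root_gen.
by rewrite size_gen; have := card_P_le; lia.
Qed.

Lemma dual_CP_of_vanish x :
  (forall i : 'I_n, i \in P -> (wpoly (map_mx iota x)).[theta ^- i] = 0) -> x \in dual_code C.
Proof.
move=> x0; rewrite inE; apply/forall_inP => c cC; apply/eqP/(fmorph_inj iota).
apply: (mulIf (prim_root_natr_neq0 theta_prim)); rewrite rmorph0 mul0r mulr_natr rmorph_sum.
have -> : \sum_(j < n) iota (x ord0 j * c ord0 j) =
          \sum_(j < n) map_mx iota x ord0 j * map_mx iota c ord0 j.
  by apply: eq_bigr => j _; rewrite !mxE rmorphM.
rewrite (dot_dft theta_prim) big1 // => i _; have [iP | iNP] := boolP (i \in P).
  by rewrite x0 ?mulr0.
by rewrite dft_CP ?mul0r.
Qed.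

Section QuadraticExtension.
Hypothesis L_card : #|L| = (q ^ 2)%N.

Lemma frobK (y : L) : y ^+ q ^+ q = y.
Proof. by rewrite -exprM mulnn -L_card expf_card. Qed.

Definition trace_word (b w : L) : 'rV[F]_n :=
  \row_(j < n) iota_pre iota (b * w ^+ j + (b * w ^+ j) ^+ q).

Lemma map_trace_word b w :
  map_mx iota (trace_word b w) = \row_(j < n) (b * w ^+ j + (b * w ^+ j) ^+ q).
Proof.
apply/rowP => j; rewrite !mxE iota_preK // -[(_ + _) ^+ q]/(frob _) rmorphD /=.
by rewrite /cardFrobenius frobK addrC.
Qed.

Lemma trace_word_CP b i : i \in P -> trace_word b (theta ^- i) \in C.
Proof.
move=> iP; apply/CP_dftP => k kNP; rewrite map_trace_word.
set w := theta ^- i; have wn : n.-unity_root w.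
  by rewrite unity_rootE exprVn (expr_theta_order theta_prim) invr1.
have -> : \row_(j < n) (b * w ^+ j + (b * w ^+ j) ^+ q) =
          \row_(j < n) (b * w ^+ j) + \row_(j < n) (b ^+ q * (w ^+ q) ^+ j).
  by apply/rowP => j; rewrite !mxE exprMn exprAC.
rewrite dftD ?dft_geom //; last first.
  by move: wn; rewrite !unity_rootE exprAC => /eqP ->; rewrite expr1n.
rewrite /w exprVn -expr_theta_muq !(theta_ratio_eq1 theta_prim).
have [ki kmu] : k != i /\ k != muq i.
  by split; apply: contraNneq kNP => ->; rewrite ?muq_mem.
by rewrite (negbTE ki) (negbTE kmu) addr0.
Qed.

(* Orthogonality to the trace words gives b y + (b y)^q = 0 for all b, so y = 0
   because z |-> z + z^q does not vanish identically on L. *)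
Lemma vanish_of_dual_CP x : x \in dual_code C ->
  forall i : 'I_n, i \in P -> (wpoly (map_mx iota x)).[theta ^- i] = 0.
Proof.
move=> xC i iP; set w := theta ^- i; set y := (wpoly _).[w].
have trace_y0 b : b * y + (b * y) ^+ q = 0.
  rewrite inE in xC; have /eqP := forall_inP xC _ (trace_word_CP b iP).
  move=> /(congr1 iota); rewrite rmorph0 rmorph_sum => <-.
  rewrite /y horner_wpoly mulr_sumr -[(\sum_(j < n) _) ^+ q]/(frob _) rmorph_sum -big_split.
  apply: eq_bigr => j _; have := congr1 (fun M : 'rV[L]_n => M ord0 j) (map_trace_word b w).
  rewrite rmorphM !mxE => -> /=; rewrite /cardFrobenius !exprMn rmorph_expr_card.
  by rewrite mulrDr !(mulrCA (iota _)).
have [// | y_neq0] := eqVneq y 0.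
have q_lt_L : (q < #|L|)%N.
  by rewrite L_card -{1}[q]muln1 ltn_mul2l ltnW ?finNzRing_gt1.
have [z z_tr] := exists_trace_neq0 q_lt_L.
by move: (trace_y0 (z / y)); rewrite divfK // => /eqP; rewrite (negbTE z_tr).
Qed.

Lemma dual_CP_hornerP x : reflect
  (forall i : 'I_n, i \in P -> (wpoly (map_mx iota x)).[theta ^- i] = 0) (x \in dual_code C).
Proof. by apply: (iffP idP); [exact: vanish_of_dual_CP | exact: dual_CP_of_vanish]. Qed.

End QuadraticExtension.

End CyclicCode.

Lemma modn_lt_double d a : (a < 2 * d)%N -> (a %% d = if a < d then a else a - d)%N.
Proof.
move=> a_lt; case: ltnP => [a_lt_d | d_le_a]; first exact: modn_small.
by rewrite -[in LHS](subnK d_le_a) modnDr modn_small //; lia.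
Qed.

(* With q = 4l + 1 and n = q + 1, multiplication by q is negation in Z_n, and
   P = {-l, ..., l} is the set of residues k with (k + l) mod n < n' = n / 2. *)
Section SymmetricWindow.
Variable l : nat.
Local Notation q := (4 * l).+1%N.
Local Notation n := q.+1.
Local Notation n' := (2 * l).+1%N.

Definition in_window k := ((k + l) %% n < n')%N.

Lemma double_n' : (2 * n')%N = n.
Proof. lia. Qed.

Lemma n'_lt_n : (n' < n)%N.
Proof. lia. Qed.

Lemma subn_n' : (n - n')%N = n'.
Proof. lia. Qed.

Lemma in_window_mod k : in_window (k %% n) = in_window k.
Proof. by rewrite /in_window modnDml. Qed.

Lemma qmulK_mod k : (q * (q * k) = k %[mod n])%N.
Proof. by rewrite (_ : q * (q * k) = 4 * l * k * n + k)%N ?modnMDl //; nia. Qed.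

Lemma qmul_n'_mod : (q * n' = n' %[mod n])%N.
Proof. by rewrite (_ : q * n' = 2 * l * n + n')%N ?modnMDl //; nia. Qed.

Lemma addn_qmul_mod k : (k + q * k = 0 %[mod n])%N.
Proof. by rewrite -{1}(mul1n k) -mulnDl add1n modnMr mod0n. Qed.

Lemma in_window_addn' k : in_window (n' + k) = ~~ in_window k.
Proof.
rewrite /in_window -addnA -modnDmr.
move: ((k + l) %% n)%N (ltn_pmod (k + l) (ltn0Sn q)) => r r_lt.
by rewrite modn_lt_double; [case: ifP => h; lia | lia].
Qed.

Lemma in_window_qmul k : in_window (q * k) = in_window k.
Proof.
rewrite -in_window_mod -modnMmr in_window_mod -[in RHS]in_window_mod.
have := ltn_pmod k (ltn0Sn q); move: (k %% n)%N => r r_lt.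
have [-> | r_gt0] := posnP r; first by rewrite muln0.
rewrite -in_window_mod (_ : q * r = (r - 1) * n + (n - r))%N; last by nia.
rewrite modnMDl in_window_mod /in_window !modn_lt_double; try lia.
by case: ifP => h1; case: ifP => h2; lia.
Qed.

Local Notation P := [set i : 'I_n | (i <= l) || (n - l <= i)]%N.

Lemma mem_P (i : 'I_n) : (i \in P) = in_window i.
Proof.
rewrite inE /in_window modn_lt_double; last by have := ltn_ord i; lia.
by have := ltn_ord i; case: ifP => h; lia.
Qed.

Lemma ord_in_window k : (Ordinal (ltn_pmod k (ltn0Sn q)) \in P) = in_window k.
Proof. by rewrite mem_P /= in_window_mod. Qed.

Lemma muq_invariant_P : muq_invariant q P.
Proof.
have mu_P (i : 'I_n) : (inord (q * i %% n) : 'I_n) \in P = (i \in P).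
  by rewrite !mem_P inordK ?ltn_pmod // in_window_mod in_window_qmul.
apply/eqP/setP => j; apply/imsetP/idP => [[i iP ->] | jP]; first by rewrite mu_P.
exists (inord (q * j %% n)); first by rewrite mu_P.
by apply: val_inj; rewrite /= !inordK ?ltn_pmod // modnMmr qmulK_mod modn_small.
Qed.

Lemma card_P : #|P| = n'.
Proof.
pose sh (i : 'I_n) : 'I_n := inord ((n' + i) %% n).
have sh_inj : injective sh.
  move=> i j /(congr1 val); rewrite /= !inordK ?ltn_pmod // => /eqP.
  by rewrite eqn_modDl !modn_small // => /eqP /val_inj.
have sh_P i : (sh i \in P) = (i \notin P).
  by rewrite !mem_P inordK ?ltn_pmod // in_window_mod in_window_addn'.
have le_P : (#|P| <= #|~: P|)%N.
  rewrite -(card_imset _ sh_inj); apply/subset_leq_card/subsetP => _ /imsetP[i iP ->].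
  by rewrite inE sh_P iP.
have le_nP : (#|~: P| <= #|P|)%N.
  rewrite -(card_imset _ sh_inj); apply/subset_leq_card/subsetP => _ /imsetP[i iP ->].
  by rewrite sh_P -in_setC.
by have := cardsC P; rewrite card_ord; lia.
Qed.

End SymmetricWindow.

Section SymmetricIntervalCode.
Variables (F L : finFieldType) (iota : {rmorphism F -> L}) (l : nat) (theta : L).
Local Notation q := (4 * l).+1%N.
Local Notation n := q.+1.
Local Notation n' := (2 * l).+1%N.
Hypotheses (F_card : #|F| = q) (L_card : #|L| = (q ^ 2)%N).
Hypothesis theta_prim : n.-primitive_root theta.
Local Notation P := [set i : 'I_n | (i <= l) || (n - l <= i)]%N.
Local Notation C := (CP iota theta P).

Let P_inv : muq_invariant #|F| P. Proof. by rewrite F_card muq_invariant_P. Qed.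
Let L_card' : #|L| = (#|F| ^ 2)%N. Proof. by rewrite F_card. Qed.

Lemma natr_n : n%:R = 1 :> L.
Proof. by rewrite -addn1 natrD -F_card (natr_card iota) add0r. Qed.

Lemma theta_n' : theta ^+ n' = -1.
Proof. by apply: prim_root_half; rewrite double_n'. Qed.

Lemma theta_inv_qmul k : theta ^- k = theta ^+ (q * k).
Proof.
have tk_neq0 : theta ^+ k != 0 by rewrite expf_neq0 // (theta_neq0 theta_prim).
apply: (mulfI tk_neq0); rewrite mulfV // -exprD -(prim_expr_mod theta_prim).
by rewrite addn_qmul_mod mod0n expr0.
Qed.

Lemma dft_phi (v : 'rV[L]_n) k :
  dft theta (pword n (phi_poly n theta q n' (wpoly v))) k = dft theta v (n' + q * k).
Proof. by rewrite dft_phi_poly // theta_n' invrN1 -theta_n' -exprD (mulnC k). Qed.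

Lemma dft_CP_window c k : c \in C -> ~~ in_window l k -> dft theta (map_mx iota c) k = 0.
Proof.
move=> cC kP; rewrite (eq_dft_mod theta_prim _ (esym (modn_mod k n))).
rewrite -[(k %% n)%N]/(nat_of_ord (Ordinal (ltn_pmod k (ltn0Sn q)))).
by apply: (dft_CP theta_prim cC); rewrite ord_in_window.
Qed.

Lemma dft_dual_window x k :
  x \in dual_code C -> in_window l k -> dft theta (map_mx iota x) (q * k) = 0.
Proof.
move=> /(dual_CP_hornerP iota theta_prim P_inv L_card') x0 kP.
rewrite /dft -theta_inv_qmul -(prim_expr_mod theta_prim k).
rewrite -[(k %% n)%N]/(nat_of_ord (Ordinal (ltn_pmod k (ltn0Sn q)))).
by rewrite x0 // ord_in_window.
Qed.

Lemma phi_image_CP : phi_image iota theta q n' C = dual_code C.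
Proof.
apply/setP => y; rewrite [in LHS]inE; apply/idP/idP.
  case/exists_inP => c cC /eqP eq_y.
  apply/(dual_CP_hornerP iota theta_prim P_inv L_card') => i iP.
  rewrite theta_inv_qmul -[LHS]/(dft theta _ _) eq_y dft_phi.
  rewrite (eq_dft_mod theta_prim _ (_ : _ = n' + i %[mod n])%N); last first.
    by rewrite -modnDmr qmulK_mod modnDmr.
  by rewrite (dft_CP_window cC) // in_window_addn' -mem_P iP.
move=> yC; pose c := pword n ((wpoly y \Po ((-1)%:P * 'X^q)) %% ('X^n - 1)).
have eq_c : map_mx iota c = pword n (phi_poly n theta q n' (wpoly (map_mx iota y))).
  rewrite -map_pword map_wpoly (phi_poly_map _ _ _ (_ : _ = iota (-1))) //.
  by rewrite theta_n' invrN1 rmorphN1.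
apply/exists_inP; exists c.
  apply/(CP_dftP iota theta_prim P_inv) => i iNP; rewrite eq_c dft_phi.
  rewrite (eq_dft_mod theta_prim _ (_ : _ = q * (n' + i) %[mod n])%N); last first.
    by rewrite mulnDr -[in RHS]modnDml qmul_n'_mod modnDml.
  by rewrite (dft_dual_window yC) // in_window_addn' -mem_P.
apply/eqP/(dft_inj theta_prim) => k; rewrite eq_c !dft_phi.
apply: (eq_dft_mod theta_prim); rewrite mulnDr addnA -modnDmr qmulK_mod modnDmr.
by rewrite -modnDml addn_qmul_mod.
Qed.

Lemma iso_self_dual_CP : iso_self_dual iota q theta C.
Proof.
exists q, q, n'; split; split.
- exact: ltnSn.
- exact: coprimenS.
- by apply/eqP; have := qmulK_mod l 1; rewrite !muln1.
- by [].
- exact: n'_lt_n.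
- exact/eqP/qmul_n'_mod.
- exact: phi_image_CP.
Qed.

Lemma dft_grs_word_l (a : {poly L}) k : (size a <= n')%N ->
  dft theta (grs_word n theta l a) k = a`_((k + l) %% n).
Proof.
move=> sa; rewrite (dft_grs_word theta_prim); last exact: leq_trans sa (ltnW (n'_lt_n l)).
by rewrite -mulr_natr natr_n mulr1.
Qed.

Lemma CP_grsP c : c \in C <-> exists a : {poly L}, (size a <= n')%N /\
  forall j : 'I_n, iota (c ord0 j) = theta ^+ (j * l) * a.[theta ^- j].
Proof.
have grsE a : (forall j : 'I_n, iota (c ord0 j) = theta ^+ (j * l) * a.[theta ^- j]) <->
    map_mx iota c = grs_word n theta l a.
  by split => [eq_c | /rowP eq_c j]; [apply/rowP => j | have := eq_c j]; rewrite !mxE.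
split=> [cC | [a [sa /grsE eq_c]]].
  exists (\poly_(k < n') dft theta (map_mx iota c) (k + q * l)); split; first exact: size_poly.
  apply/grsE/esym/(dft_inj theta_prim) => i; rewrite dft_grs_word_l ?size_poly // coef_poly.
  case: ifP => [_ | iP]; last by rewrite (dft_CP_window cC) //= /in_window iP.
  apply: (eq_dft_mod theta_prim); rewrite modnDml -addnA -modnDmr.
  by rewrite addn_qmul_mod mod0n addn0.
apply/(CP_dftP iota theta_prim P_inv) => i iNP.
rewrite eq_c dft_grs_word_l // nth_default //; apply: leq_trans sa _.
by rewrite leqNgt -/(in_window l i) -mem_P.
Qed.

Lemma card_CP_interval : #|C| = (q ^ n')%N.
Proof. by rewrite (card_CP iota theta_prim P_inv) F_card card_P. Qed.

Lemma CP_wt_lb c : c \in C -> c != 0 -> (n'.+1 <= wt c)%N.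
Proof.
move=> /CP_grsP[a [sa eq_c]] c_neq0.
have a_neq0 : a != 0.
  apply: contra_neq c_neq0 => a0; apply/rowP => j; apply: (fmorph_inj iota).
  by rewrite eq_c a0 horner0 mulr0 !mxE rmorph0.
have -> : wt c = wt (grs_word n theta l a).
  by rewrite -(wt_map_mx iota); congr wt; apply/rowP => j; rewrite !mxE eq_c.
have := leq_trans (grs_word_wt theta_prim l a_neq0) (leq_add (leqnn _) sa).
by rewrite -double_n' mul2n -addnn -addSn leq_add2r.
Qed.

Lemma CP_min_wt_word : exists2 c, c \in C & c != 0 /\ wt c = n'.+1.
Proof.
have size_g : size (genF iota theta P) = n'.+1 by rewrite size_genF // card_P subn_n'.
exists (pword n (genF iota theta P)); first by apply: gen_word_CP; rewrite ?card_P.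
have gen_neq0 : pword n (genF iota theta P) != 0.
  apply: contra_neq (genF_neq0 iota theta_prim P_inv) => gen0.
  have size_le : (size (genF iota theta P) <= n)%N by rewrite size_g n'_lt_n.
  by rewrite -(pwordK size_le) gen0 /wpoly big1 // => i _; rewrite mxE mul0r.
split=> //; apply/eqP; rewrite eqn_leq CP_wt_lb ?andbT //.
  by rewrite -size_g wt_pword.
by apply: gen_word_CP; rewrite ?card_P.
Qed.

End SymmetricIntervalCode.

Theorem theorem4p8 (F L : finFieldType) (iota : {rmorphism F -> L}) (q : nat)
    (theta : L)
    (hF : #|F| = q) (hL : #|L| = (q ^ 2)%N) (hq : (q %% 4 = 1)%N)
    (htheta : q.+1.-primitive_root theta) :
  let n := q.+1 in
  let n' := (n %/ 2)%N in
  let l := ((n - 2) %/ 4)%N in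
  let P := [set i : 'I_q.+1 | ((i <= l) || (n - l <= i))%N] in
  let C := CP iota theta P in
  muq_invariant q P
  (* (i) *)
  /\ (iso_self_dual iota q theta C /\ phi_image iota theta (n - 1) n' C = dual_code C)
  (* (ii) *)
  /\ ((forall c : 'rV[F]_n, c \in C <->
         exists a : {poly L}, (size a <= n')%N /\
           forall j : 'I_n, iota (c ord0 j) = theta ^+ (j * l) * a.[theta ^- j])
      /\ #|C| = (q ^ ((q + 1) %/ 2))%N
      /\ (exists2 c, c \in C & c != 0 /\ wt c = ((q + 3) %/ 2)%N)
      /\ (forall c, c \in C -> c != 0 -> ((q + 3) %/ 2 <= wt c)%N)).
Proof.
have [l ql] : exists l, q = (4 * l).+1%N by exists (q %/ 4)%N; lia.
move: hF hL htheta; rewrite {}ql => hF hL htheta n n' l' P C.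
rewrite {}/C {}/P {}/l' {}/n' {}/n.
have -> : (((4 * l).+2 - 2) %/ 4 = l)%N by lia.
have -> : ((4 * l).+2 %/ 2 = (2 * l).+1)%N by lia.
have -> : (((4 * l).+1 + 1) %/ 2 = (2 * l).+1)%N by lia.
have -> : (((4 * l).+1 + 3) %/ 2 = (2 * l).+2)%N by lia.
rewrite subn1 /=.
split; first exact: muq_invariant_P.
split; first split.
- exact: (iso_self_dual_CP iota hF hL htheta).
- exact: (phi_image_CP iota hF hL htheta).
split; first exact: (CP_grsP iota hF htheta).
split; first exact: (card_CP_interval iota hF htheta).
split; first exact: (CP_min_wt_word iota hF htheta).
exact: (CP_wt_lb hF htheta).
Qed.
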